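(* Let $\lvert\psi\rangle$ be an $n$-qubit pure state. Then \[ \frac{4 \eta - 1}{3} \leq F_\mathcal{S}(\lvert\psi\rangle). \]
   Context: For $x=(a,b)\in\mathbb F_2^{2n}$ the Weyl operator is $W_x = i^{a\cdot b}X^{a_1}Z^{b_1}\otimes\cdots\otimes X^{a_n}Z^{b_n}$. For an $n$-qubit pure state $\lvert\psi\rangle$, $p_\psi(x)=2^{-n}\langle\psi|W_x|\psi\rangle^2$ (a probability distribution on $\mathbb F_2^{2n}$), $q_\psi(x)=\sum_y p_\psi(y)p_\psi(x+y)$, and $\eta \coloneqq \mathbb{E}_{x\sim q_\psi}[2^n p_\psi(x)] = 4^n\sum_{x\in\mathbb F_2^{2n}} p_\psi(x)^3$. The stabilizer fidelity is $F_\mathcal{S}(\lvert\psi\rangle)=\max_{\lvert\phi\rangle\text{ stabilizer}}\lvert\langle\phi|\psi\rangle\rvert^2$. *)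

From HB Require Import structures.
From mathcomp Require Import all_boot all_order all_algebra.
From mathcomp Require Import complex.
From mathcomp Require Import boolp classical_sets reals.
Set Implicit Arguments. Unset Strict Implicit. Unset Printing Implicit Defensive.
Import Order.TTheory GRing.Theory Num.Theory.
Local Open Scope ring_scope.
Local Open Scope complex_scope.

(* computational basis labels of n qubits: bit strings of length n *)
Definition bits (n : nat) := {ffun 'I_n -> bool}.

Definition F2n (n : nat) := (bits n * bits n)%type.

(* a . b computed as an integer (number of positions where both are 1),
   as needed for the phase i^{a.b} *)
Definition bdot n (a b : bits n) : nat := #|[set i | a i && b i]|.

Definition bxor n (a b : bits n) : bits n := [ffun i => a i (+) b i].

Definition qstate (R : realType) (n : nat) := bits n -> R[i].

(* Matrix entry <j| W_x |k> of W_x = i^{a.b} X^{a_1}Z^{b_1} (x) ... (x) X^{a_n}Z^{b_n}: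
   X^a Z^b |k> = (-1)^{b.k} |k xor a>. *)
Definition weyl_entry (R : realType) n (x : F2n n) (j k : bits n) : R[i] :=
  'i ^+ (bdot x.1 x.2) *
  (if j == bxor k x.1 then (-1) ^+ (bdot x.2 k) else 0).

Definition weyl_apply (R : realType) n (x : F2n n) (v : qstate R n) : qstate R n :=
  fun j => \sum_(k : bits n) weyl_entry R x j k * v k.

Definition braket (R : realType) n (phi psi : qstate R n) : R[i] :=
  \sum_(k : bits n) (phi k)^* * psi k.

Definition is_pure_state (R : realType) n (psi : qstate R n) : Prop :=
  braket psi psi = 1.

Definition pdist (R : realType) n (psi : qstate R n) (x : F2n n) : R[i] :=
  (2 ^+ n)^-1 * (braket psi (weyl_apply x psi)) ^+ 2.

Definition magic_eta (R : realType) n (psi : qstate R n) : R[i] :=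
  4 ^+ n * \sum_(x : F2n n) pdist psi x ^+ 3.

(* stabilizer state: a unit vector whose stabilizer group
   {+-W_x : W_x phi = +- phi} has 2^n elements (maximal abelian subgroup
   of the Pauli group not containing -I). *)
Definition is_stabilizer_state (R : realType) n (phi : qstate R n) : Prop :=
  is_pure_state phi /\
  #|[set x : F2n n | `[< weyl_apply x phi = phi \/ weyl_apply x phi = (fun j => - phi j) >]]|
    = (2 ^ n)%N.

Definition stab_fidelity (R : realType) n (psi : qstate R n) : R :=
  sup [set r : R | exists phi : qstate R n,
         is_stabilizer_state phi /\ r = complex.Re (`|braket phi psi| ^+ 2)].

From HB Require Import structures.
From mathcomp Require Import all_boot all_order all_algebra.
From mathcomp Require Import complex.
From mathcomp Require Import boolp classical_sets reals.
From mathcomp Require Import ring lra.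
Import Order.TTheory GRing.Theory Num.Theory.
Local Open Scope ring_scope.
Local Open Scope complex_scope.
Set Implicit Arguments. Unset Strict Implicit. Unset Printing Implicit Defensive.

(* Write r(x) = <psi|W_x|psi>; it is real, p(x) = r(x)^2 / 2^n and
   sum_x r(x)^2 = 2^n.  If W_s and W_t anticommute then r(s)^2 + r(t)^2 <= 1, so
   the heavy x, those with r(x)^2 > 1/2, pairwise commute and some stabilizer
   state phi is stabilized by all of them up to sign.  The fidelities
   F(y) = |<W_y phi|psi>|^2 satisfy 2^n F(y) = sum_x (-1)^<x,y> r_phi(x) r(x), so
   by Parseval max_y F(y) >= sum_y F(y)^2 / sum_y F(y) = 2^-n sum_x r_phi(x)^2 r(x)^2,
   which is at least 2^-n times the heavy mass sum_{r(x)^2 > 1/2} r(x)^2.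
   Finally 4 r^6 <= r^2 + 3 r^2 [r^2 > 1/2] pointwise, so 4 eta - 1 <= 3 max_y F(y). *)

Section Bits.
Variable n : nat.

Definition bits0 : bits n := [ffun => false].

Lemma bxorC (a b : bits n) : bxor a b = bxor b a.
Proof. by apply/ffunP=> i; rewrite !ffunE addbC. Qed.

Lemma bxorA (a b c : bits n) : bxor a (bxor b c) = bxor (bxor a b) c.
Proof. by apply/ffunP=> i; rewrite !ffunE addbA. Qed.

Lemma bxor0 (a : bits n) : bxor a bits0 = a.
Proof. by apply/ffunP=> i; rewrite !ffunE addbF. Qed.

Lemma bxorK (b a : bits n) : bxor (bxor a b) b = a.
Proof. by apply/ffunP=> i; rewrite !ffunE -addbA addbb addbF. Qed.

Lemma bxorIr (b : bits n) : injective (fun a : bits n => bxor a b).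
Proof. by move=> a a' /(congr1 (fun c => bxor c b)); rewrite /= !bxorK. Qed.

Lemma bxorI (a : bits n) : injective (bxor a).
Proof. by move=> b b'; rewrite !(bxorC a); apply: bxorIr. Qed.

Lemma bxor_eq (j k a : bits n) : (j == bxor k a) = (k == bxor j a).
Proof. by apply/eqP/eqP=> ->; rewrite bxorK. Qed.

Lemma bxor_eq0 (j l : bits n) : (bxor j l == bits0) = (j == l).
Proof.
apply/eqP/eqP=> [h|->]; last by apply/ffunP=> i; rewrite !ffunE addbb.
by rewrite -(bxorK l j) h bxorC bxor0.
Qed.

Lemma card_bits : #|bits n| = (2 ^ n)%N.
Proof. by rewrite card_ffun card_bool card_ord. Qed.

(* [bsign T u v] = (-1)^(u.v) (see [signr_bdot]); the product form makes it
   multiplicative in each argument. *)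
Definition bsign (T : pzRingType) (u v : bits n) : T :=
  \prod_i (if u i && v i then -1 else 1).

Lemma signr_bdot (T : pzRingType) u v : (-1) ^+ bdot u v = bsign T u v.
Proof.
rewrite /bdot /bsign -sum1_card expr_sum big_mkcond /=.
by apply: eq_bigr=> i _; rewrite inE; case: ifP.
Qed.

Lemma bsignC (T : pzRingType) u v : bsign T u v = bsign T v u.
Proof. by apply: eq_bigr=> i _; rewrite andbC. Qed.

Lemma bsign0l (T : pzRingType) v : bsign T bits0 v = 1.
Proof. by rewrite /bsign big1 // => i _; rewrite ffunE. Qed.

Lemma bsign0r (T : pzRingType) v : bsign T v bits0 = 1.
Proof. by rewrite bsignC bsign0l. Qed.

Lemma bsignDr (T : comPzRingType) u v w :
  bsign T u (bxor v w) = bsign T u v * bsign T u w.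
Proof.
rewrite /bsign -big_split /=; apply: eq_bigr=> i _; rewrite ffunE.
by case: (u i); case: (v i); case: (w i); rewrite /= ?mulr1 ?mul1r ?mulrNN ?mulr1.
Qed.

Lemma bsignDl (T : comPzRingType) u v w :
  bsign T (bxor v w) u = bsign T v u * bsign T w u.
Proof. by rewrite bsignC bsignDr !(bsignC _ u). Qed.

Lemma bsign_pm1 (T : pzRingType) u v : bsign T u v = 1 \/ bsign T u v = -1.
Proof.
rewrite /bsign; apply: (big_ind (fun x : T => x = 1 \/ x = -1)); first by left.
  by move=> x y [->|->] [->|->]; rewrite ?mulr1 ?mul1r ?mulrNN ?mulr1; auto.
by move=> i _; case: ifP; auto.
Qed.

Lemma bsignK (T : pzRingType) u v : bsign T u v * bsign T u v = 1.
Proof. by case: (bsign_pm1 T u v)=> ->; rewrite ?mulr1 ?mulrNN ?mulr1. Qed.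

Lemma sum_bsign (T : numFieldType) v :
  \sum_(u : bits n) bsign T u v = if v == bits0 then (2 ^ n)%:R else 0.
Proof.
case: ifP=> [/eqP ->|hv].
  by rewrite (eq_bigr (fun _ => 1)) ?sumr_const ?card_bits // => u _; rewrite bsign0r.
have [i vi] : exists i, v i.
  apply/existsP; apply: contraFT hv; rewrite negb_exists=> /forallP h.
  by apply/eqP/ffunP=> i; rewrite ffunE; apply/negbTE/h.
pose e : bits n := [ffun j => j == i].
have flip u : bsign T (bxor u e) v = - bsign T u v.
  rewrite bsignDl [bsign T e v](bigD1 i) //= big1 ?ffunE ?eqxx ?vi ?mulr1 ?mulrN1 //.
  by move=> j /negbTE hj; rewrite ffunE hj.
set S := \sum_u _; have : S = - S.
  by rewrite {1}/S (reindex_inj (@bxorIr e)) /= (eq_bigr _ (fun u _ => flip u)) sumrN.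
by move/eqP; rewrite -addr_eq0 -mulr2n mulrn_eq0 => /eqP.
Qed.

Lemma sum_F2n (V : nmodType) (F : F2n n -> V) :
  \sum_x F x = \sum_(a : bits n) \sum_(b : bits n) F (a, b).
Proof. by rewrite pair_big; apply: eq_bigr=> -[a b]. Qed.

End Bits.

Lemma exists_ge_sqr_mean (R : realDomainType) (J : finType) (y0 : J) (F : J -> R) :
  (forall y, 0 <= F y) -> exists y1, \sum_y F y ^+ 2 <= F y1 * \sum_y F y.
Proof.
move=> F_ge0; have [y1 _ Fmax] := @arg_maxP _ R J y0 xpredT F erefl.
exists y1; rewrite mulr_sumr; apply: ler_sum=> y _.
by rewrite expr2; apply: ler_wpM2r; [exact: F_ge0 | exact: Fmax].
Qed.

Section OrthogonalTransform.
Variables (R : fieldType) (I J : finType) (N : R) (c : I -> J -> R).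
Hypothesis N_neq0 : N != 0.
Hypothesis c_orth : forall x x', \sum_y c x y * c x' y = if x == x' then N ^+ 2 else 0.
Variables (g : I -> R) (F : J -> R).
Hypothesis F_transform : forall y, N * F y = \sum_x c x y * g x.

Lemma sum_orth_transform x0 : (forall y, c x0 y = 1) -> \sum_y F y = N * g x0.
Proof.
move=> c_x0; apply: (mulfI N_neq0); rewrite mulr_sumr.
rewrite (eq_bigr _ (fun y _ => F_transform y)) exchange_big /=.
rewrite (eq_bigr (fun x => g x * if x == x0 then N ^+ 2 else 0)); last first.
  by move=> x _; rewrite -c_orth mulr_sumr; apply: eq_bigr=> y _; rewrite c_x0; ring.
rewrite (bigD1 x0) //= big1 ?addr0 ?eqxx; first by ring.
by move=> x /negbTE ->; rewrite mulr0.
Qed.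

Lemma sum_orth_transform_sqr : \sum_y F y ^+ 2 = \sum_x g x ^+ 2.
Proof.
apply: (mulfI (expf_neq0 2 N_neq0)); rewrite !mulr_sumr.
transitivity (\sum_y (\sum_x c x y * g x) * (\sum_x c x y * g x)).
  by apply: eq_bigr=> y _; rewrite -F_transform; ring.
under eq_bigr do rewrite big_distrl /=.
under eq_bigr do under eq_bigr do rewrite big_distrr /=.
rewrite exchange_big /=; apply: eq_bigr=> x _; rewrite exchange_big /=.
rewrite (eq_bigr (fun x' => g x * g x' * if x == x' then N ^+ 2 else 0)); last first.
  by move=> x' _; rewrite -c_orth mulr_sumr; apply: eq_bigr=> y _; ring.
rewrite (bigD1 x) //= big1 ?addr0 ?eqxx; first by ring.
by move=> x' hx'; rewrite eq_sym (negbTE hx') mulr0.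
Qed.

End OrthogonalTransform.

Lemma heavy_sixth_moment (R : realFieldType) (I : finType) (r : I -> R) (N F : R) :
  0 < N -> (forall x, r x ^+ 2 <= 1) -> \sum_x r x ^+ 2 = N ->
  \sum_(x in [set x | 1/2 < r x ^+ 2]) r x ^+ 2 <= N * F ->
  (4 * (N^-1 * \sum_x r x ^+ 6) - 1) / 3 <= F.
Proof.
move=> N_gt0 r_le1 sum_r2; set T := [set x | _]; set A := \sum_(x in T) _ => A_le.
(* With u = r x ^+ 2 in [0, 1]: 4 u^3 <= u when u <= 1/2, and 4 u^3 <= 4 u. *)
have pointwise x :
    4 * r x ^+ 6 <= r x ^+ 2 + (if x \in T then 3 * r x ^+ 2 else 0).
  rewrite inE (_ : 6 = 2 * 3)%N // exprM.
  have := r_le1 x; have := sqr_ge0 (r x); set u := r x ^+ 2 => u_ge0 u_le1.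
  rewrite !exprS expr0 mulr1; case: ifP=> [_|/negbT]; first by nra.
  by rewrite -real_leNgt ?num_real // => u_le; nra.
have S6_le : 4 * \sum_x r x ^+ 6 <= N + 3 * A.
  have -> : A = \sum_x (if x \in T then r x ^+ 2 else 0) by rewrite /A big_mkcond.
  rewrite -sum_r2 !mulr_sumr -big_split /=.
  apply: ler_sum=> x _; apply: le_trans (pointwise x) _.
  by case: ifP; rewrite ?mulr0.
suff : 4 * (N^-1 * \sum_x r x ^+ 6) <= 3 * F + 1 by lra.
by rewrite mulrCA mulrC ler_pdivrMr //; nra.
Qed.

Section Weyl.
Variables (R : realType) (n : nat).
Local Notation C := R[i].
Local Notation W := (@weyl_apply R n).
Implicit Types (u v w phi psi : qstate R n) (x y : F2n n).

Definition weyl_phase x : C := 'i ^+ bdot x.1 x.2.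

Lemma weyl_phase_sqr x : weyl_phase x * weyl_phase x = bsign C x.1 x.2.
Proof. by rewrite /weyl_phase -exprMn -expr2 sqr_i signr_bdot. Qed.

Lemma weyl_phaseJ x : (weyl_phase x)^*%R = weyl_phase x * bsign C x.1 x.2.
Proof.
rewrite /weyl_phase rmorphXn /= -signr_bdot -exprMn.
by congr (_ ^+ _); apply/eqP; rewrite eq_complex /=; simpc.
Qed.

Lemma bsignJ (u v : bits n) : (bsign C u v)^*%R = bsign C u v.
Proof.
by case: (bsign_pm1 C u v)=> ->; apply/eqP; rewrite eq_complex /= ?oppr0 !eqxx.
Qed.

Lemma weyl_applyE x v j :
  W x v j = weyl_phase x * bsign C x.2 (bxor j x.1) * v (bxor j x.1).
Proof.
rewrite /weyl_apply (bigD1 (bxor j x.1)) //= big1 ?addr0.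
  by rewrite /weyl_entry bxorK eqxx signr_bdot.
by move=> k hk; rewrite /weyl_entry bxor_eq (negbTE hk) mulr0 mul0r.
Qed.

Lemma weyl0 v : W (bits0 n, bits0 n) v = v.
Proof.
apply: funext=> j; rewrite weyl_applyE /= bxor0 bsign0l /weyl_phase.
suff -> : bdot (bits0 n) (bits0 n) = 0%N by rewrite expr0 !mul1r.
by apply/eqP; rewrite cards_eq0; apply/eqP/setP=> i; rewrite !inE !ffunE.
Qed.

Lemma weylK x v : W x (W x v) = v.
Proof.
apply: funext=> j; rewrite !weyl_applyE bxorK [bsign C _ (bxor j x.1)]bsignDr.
transitivity (weyl_phase x * weyl_phase x * bsign C x.2 x.1 *
  (bsign C x.2 j * bsign C x.2 j) * v j); first ring.
by rewrite bsignK weyl_phase_sqr bsignC bsignK !mul1r.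
Qed.

Lemma weylD x u v : W x (fun j => u j + v j) = fun j => W x u j + W x v j.
Proof. by apply: funext=> j; rewrite !weyl_applyE mulrDr. Qed.

Lemma weylZ x (c : C) u : W x (fun j => c * u j) = fun j => c * W x u j.
Proof. by apply: funext=> j; rewrite !weyl_applyE; ring. Qed.

Lemma weylN x u : W x (fun j => - u j) = fun j => - W x u j.
Proof. by apply: funext=> j; rewrite !weyl_applyE; ring. Qed.

(* [W x] and [W y] commute up to the sign (-1)^<x,y> of the symplectic form. *)
Definition symp_sign (T : pzRingType) x y : T := bsign T y.2 x.1 * bsign T x.2 y.1.

Lemma symp_signC (T : comPzRingType) x y : symp_sign T x y = symp_sign T y x.
Proof. by rewrite /symp_sign mulrC. Qed.

Lemma symp_sign0 (T : pzRingType) y : symp_sign T (bits0 n, bits0 n) y = 1.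
Proof. by rewrite /symp_sign bsign0r bsign0l mulr1. Qed.

Lemma symp_sign_pm1 (T : pzRingType) x y :
  symp_sign T x y = 1 \/ symp_sign T x y = -1.
Proof.
rewrite /symp_sign; case: (bsign_pm1 T y.2 x.1)=> ->;
  case: (bsign_pm1 T x.2 y.1)=> ->; rewrite ?mulr1 ?mul1r ?mulrNN ?mulr1; auto.
Qed.

Lemma symp_sign_real x y : symp_sign C x y = (symp_sign R x y)%:C.
Proof.
have bsign_real (a b : bits n) : bsign C a b = (bsign R a b)%:C.
  by rewrite rmorph_prod; apply: eq_bigr=> i _; case: ifP; rewrite ?rmorphN rmorph1.
by rewrite /symp_sign !bsign_real rmorphM.
Qed.

Lemma weyl_comm x y v : W x (W y v) = fun j => symp_sign C x y * W y (W x v) j.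
Proof.
apply: funext=> j; rewrite !weyl_applyE -!bxorA (bxorC y.1 x.1) /symp_sign.
rewrite ![bsign C _ (bxor j _)]bsignDr ![bsign C _ (bxor x.1 _)]bsignDr.
set s := bsign C x.2 y.1.
transitivity (weyl_phase x * weyl_phase y * bsign C x.2 j * bsign C y.2 j *
  bsign C x.2 x.1 * bsign C y.2 y.1 * bsign C y.2 x.1 * (s * s) *
  v (bxor j (bxor x.1 y.1))); first by rewrite bsignK mulr1; ring.
ring.
Qed.

Lemma braketJ u v : (braket u v)^*%R = braket v u.
Proof.
rewrite /braket rmorph_sum; apply: eq_bigr=> k _.
by rewrite rmorphM /= conjCK mulrC.
Qed.

Lemma braketDr u v w : braket u (fun j => v j + w j) = braket u v + braket u w.
Proof. by rewrite /braket -big_split; apply: eq_bigr=> k _; rewrite mulrDr. Qed.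

Lemma braketDl u v w : braket (fun j => u j + v j) w = braket u w + braket v w.
Proof. by rewrite /braket -big_split; apply: eq_bigr=> k _; rewrite rmorphD mulrDl. Qed.

Lemma braketZr u (c : C) v : braket u (fun j => c * v j) = c * braket u v.
Proof. by rewrite /braket mulr_sumr; apply: eq_bigr=> k _; ring. Qed.

Lemma braketZl u (c : C) v : braket (fun j => c * u j) v = c^*%R * braket u v.
Proof. by rewrite /braket mulr_sumr; apply: eq_bigr=> k _; rewrite rmorphM; ring. Qed.

Lemma braketNr u v : braket u (fun j => - v j) = - braket u v.
Proof. by rewrite /braket -sumrN; apply: eq_bigr=> k _; rewrite mulrN. Qed.

Lemma braketNl u v : braket (fun j => - u j) v = - braket u v.
Proof. by rewrite /braket -sumrN; apply: eq_bigr=> k _; rewrite rmorphN mulNr. Qed.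

Lemma braket_ge0 u : 0 <= braket u u.
Proof. by apply: sumr_ge0=> k _; rewrite mulrC mul_conjC_ge0. Qed.

Lemma braket_weyl x u v : braket u (W x v) = braket (W x u) v.
Proof.
rewrite /braket (reindex_inj (@bxorIr _ x.1)) /=.
apply: eq_bigr=> k _; rewrite !weyl_applyE bxorK !rmorphM /= weyl_phaseJ bsignJ.
rewrite bsignDr; transitivity (weyl_phase x * (bsign C x.2 k * (u (bxor k x.1))^*%R * v k) *
  (bsign C x.1 x.2 * bsign C x.2 x.1)); last by ring.
by rewrite (bsignC _ x.1) bsignK mulr1; ring.
Qed.

Lemma braket_CauchySchwarz psi w : braket psi psi = 1 ->
  braket psi w * (braket psi w)^*%R <= braket w w.
Proof.
move=> h1; set c := braket psi w.
have := braket_ge0 (fun j => w j + (- c) * psi j).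
rewrite braketDl !braketDr braketZl (braketZr w (- c) psi) (braketZl psi (- c)).
rewrite (braketZr psi (- c) psi) h1 -[braket w psi]braketJ -/c rmorphN mulr1 => h.
by rewrite -subr_ge0 (le_trans h) // le_eqVlt; apply/orP; left; apply/eqP; ring.
Qed.

Lemma conjC_real (r : R) : (r%:C)^*%R = r%:C :> C.
Proof. exact: conjc_real. Qed.

Definition expect phi x : C := braket phi (W x phi).

Definition expectR phi x : R := complex.Re (expect phi x).

(* The Weyl operators are an orthogonal basis for the Hilbert-Schmidt inner
   product, hence |phi><phi| and |psi><psi| have inner product 2^-n times the
   sum of the products of their Weyl coefficients. *)
Lemma sum_expect_conj phi psi :
  \sum_x expect phi x * (expect psi x)^*%R
  = (2 ^ n)%:R * (braket phi psi * (braket phi psi)^*%R).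
Proof.
rewrite /expect.
pose G a j l := (phi j)^*%R * phi (bxor j a) * psi l * (psi (bxor l a))^*%R.
have expand x : braket phi (W x phi) * (braket psi (W x psi))^*%R =
    \sum_j \sum_l G x.1 j l * (bsign C x.2 (bxor j x.1) * bsign C x.2 (bxor l x.1)).
  rewrite braketJ /braket big_distrl /=; apply: eq_bigr=> j _.
  rewrite big_distrr /=; apply: eq_bigr=> l _.
  rewrite !weyl_applyE !rmorphM /= weyl_phaseJ bsignJ /G.
  transitivity (G x.1 j l * (bsign C x.2 (bxor j x.1) * bsign C x.2 (bxor l x.1)) *
    (weyl_phase x * weyl_phase x * bsign C x.1 x.2)); last first.
    by rewrite weyl_phase_sqr bsignK mulr1.
  rewrite /G; ring.
have sum_b a : \sum_b \sum_j \sum_l G a j l * (bsign C b (bxor j a) * bsign C b (bxor l a))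
    = (2 ^ n)%:R * \sum_j G a j j.
  rewrite exchange_big /= mulr_sumr; apply: eq_bigr=> j _.
  rewrite exchange_big /= (bigD1 j) //= [X in _ + X]big1 ?addr0.
    rewrite -mulr_sumr; under eq_bigr do rewrite -bsignDr.
    by rewrite sum_bsign bxor_eq0 eqxx mulrC.
  move=> l hl; rewrite -mulr_sumr; under eq_bigr do rewrite -bsignDr.
  by rewrite sum_bsign bxor_eq0 ifF ?mulr0 //; apply: contraNF hl=> /eqP /bxorIr ->.
rewrite (eq_bigr _ (fun x _ => expand x)) sum_F2n /=.
rewrite (eq_bigr _ (fun a _ => sum_b a)) -mulr_sumr; congr (_ * _).
rewrite exchange_big /= /braket big_distrl /=; apply: eq_bigr=> j _.
rewrite rmorph_sum big_distrr /= (reindex_inj (@bxorI _ j)) /=.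
apply: eq_bigr=> a _; rewrite /G rmorphM /= conjCK (bxorC j (bxor j a)) (bxorC j a) bxorK.
ring.
Qed.

Lemma expectJ phi x : (expect phi x)^*%R = expect phi x.
Proof. by rewrite /expect braketJ braket_weyl. Qed.

Lemma expect_real phi x : expect phi x = (expectR phi x)%:C.
Proof. by rewrite /expectR ReJ_add -[conjc _]/((expect phi x)^*%R) expectJ; field. Qed.

Lemma expect_normE phi x :
  expect phi x * (expect phi x)^*%R = (expectR phi x ^+ 2)%:C.
Proof. by rewrite expectJ {1 2}expect_real -rmorphM expr2. Qed.

Lemma expect0 phi : braket phi phi = 1 -> expect phi (bits0 n, bits0 n) = 1.
Proof. by rewrite /expect weyl0. Qed.

Lemma expect_weyl phi x y : expect (W y phi) x = symp_sign C x y * expect phi x.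
Proof. by rewrite /expect -braket_weyl (weyl_comm x y) weylZ weylK braketZr. Qed.

Lemma sum_expectR_sqr psi : braket psi psi = 1 ->
  \sum_x expectR psi x ^+ 2 = (2 ^ n)%:R.
Proof.
move=> h1; have := sum_expect_conj psi psi; rewrite h1 conjC1 !mulr1.
under eq_bigr do rewrite expect_normE.
by rewrite -rmorph_sum -(rmorph_nat (real_complex R)) => /complexI.
Qed.

Lemma expectR_sqr_le1 psi x : braket psi psi = 1 -> expectR psi x ^+ 2 <= 1.
Proof.
move=> h1; have := braket_CauchySchwarz (W x psi) h1.
by rewrite -/(expect psi x) expect_normE -braket_weyl weylK h1 lecR.
Qed.

(* Cauchy-Schwarz against w = r(t) W_t psi + r(t') W_t' psi: the cross terms of
   <w|w> cancel since W_t and W_t' anticommute, so <w|w> = <psi|w>. *)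
Lemma expectR_anticomm psi t t' : braket psi psi = 1 ->
  symp_sign C t t' = -1 -> expectR psi t ^+ 2 + expectR psi t' ^+ 2 <= 1.
Proof.
move=> h1 hc; set a := expectR psi t; set b := expectR psi t'.
pose w j := a%:C * W t psi j + b%:C * W t' psi j.
have psi_w : braket psi w = (a ^+ 2 + b ^+ 2)%:C.
  rewrite /w braketDr !braketZr -/(expect psi t) -/(expect psi t') !expect_real.
  by rewrite -!rmorphM -rmorphD !expr2.
have w_w : braket w w = (a ^+ 2 + b ^+ 2)%:C.
  rewrite /w braketDl !braketDr !braketZl !braketZr !conjC_real -!braket_weyl !weylK h1.
  have -> : braket psi (W t' (W t psi)) = - braket psi (W t (W t' psi)).
    by rewrite weyl_comm braketZr symp_signC hc mulN1r.
  rewrite !rmorphD !rmorphXn /= !expr2; ring.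
have := braket_CauchySchwarz w h1; rewrite w_w psi_w conjC_real -rmorphM lecR => h.
have : 0 <= a ^+ 2 + b ^+ 2 by rewrite addr_ge0 // sqr_ge0.
nra.
Qed.

Definition stab phi : {set F2n n} :=
  [set x | `[< W x phi = phi \/ W x phi = (fun j => - phi j) >]].

Lemma stabP phi x :
  reflect (W x phi = phi \/ W x phi = (fun j => - phi j)) (x \in stab phi).
Proof. by rewrite inE; apply: (iffP idP)=> /asboolP. Qed.

Definition stab_maximal phi :=
  forall x, x \in stab phi \/ exists2 y, y \in stab phi & symp_sign C x y = -1.

Lemma expectR_stab phi x : braket phi phi = 1 -> x \in stab phi ->
  expectR phi x ^+ 2 = 1.
Proof.
by move=> h1 /stabP [] e; rewrite /expectR /expect e ?braketNr h1 /= ?sqrrN expr1n.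
Qed.

Lemma expect_anticomm phi x y : y \in stab phi -> symp_sign C x y = -1 ->
  expect phi x = 0.
Proof.
move=> /stabP hy hc.
have anti : braket phi (W x (W y phi)) = - braket (W y phi) (W x phi).
  by rewrite weyl_comm braketZr hc mulN1r braket_weyl.
suff : expect phi x = - expect phi x.
  by move/eqP; rewrite -addr_eq0 -mulr2n mulrn_eq0 => /eqP.
case: hy anti => ->; first by move=> <-.
by rewrite weylN braketNr braketNl /expect => ->; ring.
Qed.

Lemma card_stab_le phi : braket phi phi = 1 -> (#|stab phi| <= 2 ^ n)%N.
Proof.
move=> h1; rewrite -(ler_nat R) -(sum_expectR_sqr h1) -sum1_card natr_sum.
rewrite [leRHS](bigID (mem (stab phi))) /= -[leLHS]addr0 lerD ?sumr_ge0 //.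
  by rewrite le_eqVlt; apply/orP; left; apply/eqP/eq_bigr=> x hx; rewrite expectR_stab.
by move=> x _; rewrite sqr_ge0.
Qed.

Lemma card_stab_maximal phi : braket phi phi = 1 -> stab_maximal phi ->
  #|stab phi| = (2 ^ n)%N.
Proof.
move=> h1 hmax; apply/eqP; rewrite -(eqr_nat R) -(sum_expectR_sqr h1).
rewrite -sum1_card natr_sum [X in _ == X](bigID (mem (stab phi))) /=.
rewrite [X in _ + X]big1 ?addr0; last first.
  move=> x hx; case: (hmax x)=> [hx'|[y hy hc]]; first by rewrite hx' in hx.
  by rewrite /expectR (expect_anticomm hy hc) expr0n.
by apply/eqP/eq_bigr=> x hx; rewrite expectR_stab.
Qed.

Lemma stab_weyl phi y : stab phi \subset stab (W y phi).
Proof.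
apply/fintype.subsetP=> x /stabP hx; apply/stabP; rewrite weyl_comm.
case: (symp_sign_pm1 C x y)=> ->; case: hx=> ->.
- by left; apply: funext=> j; rewrite mul1r.
- by right; apply: funext=> j; rewrite mul1r weylN.
- by right; apply: funext=> j; rewrite mulN1r.
- by left; apply: funext=> j; rewrite weylN mulN1r opprK.
Qed.

Lemma stabilizer_state_maximal phi : braket phi phi = 1 -> stab_maximal phi ->
  is_stabilizer_state phi.
Proof. by move=> h1 hmax; split=> //; apply: card_stab_maximal. Qed.

Lemma stabilizer_state_weyl phi y : is_stabilizer_state phi ->
  is_stabilizer_state (W y phi).
Proof.
case=> h1 hcard; have h1' : braket (W y phi) (W y phi) = 1.
  by rewrite -braket_weyl weylK.
split=> //; apply/eqP; rewrite eqn_leq card_stab_le //=.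
by rewrite -[X in (X <= _)%N]hcard; apply/subset_leq_card/stab_weyl.
Qed.

Lemma stab_maximalS v w : stab v \subset stab w -> stab_maximal v -> stab_maximal w.
Proof.
move=> /fintype.subsetP vw hmax x.
by case: (hmax x)=> [/vw|[y /vw]]; [left | right; exists y].
Qed.

Definition nonzero v := exists j, v j != 0.

(* [(1 + s W_x) v] is an s-eigenvector of [W_x] for [s = 1, -1]; the two add up to
   [2 v], so one of them is nonzero, and both are eigenvectors of every
   [W_y] that stabilizes [v] and commutes with [W_x]. *)
Lemma stab_extend v x : nonzero v -> exists w, [/\ nonzero w, x \in stab w &
  forall y, y \in stab v -> symp_sign C x y = 1 -> y \in stab w].
Proof.
move=> [j0 vj0]; pose proj (s : C) j := v j + s * W x v j.
have proj_eig s : s = 1 \/ s = -1 -> W x (proj s) = fun j => s * proj s j.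
  move=> hs; rewrite weylD weylZ weylK; apply: funext=> j.
  by rewrite /proj; case: hs=> ->; ring.
have proj_stab s y : y \in stab v -> symp_sign C x y = 1 -> y \in stab (proj s).
  move=> /stabP hy hc; apply/stabP; rewrite weylD weylZ.
  have -> : W y (W x v) = W x (W y v).
    by rewrite weyl_comm symp_signC hc; apply: funext=> j; rewrite mul1r.
  case: hy=> ->; [left | right]; rewrite // weylN; apply: funext=> j.
  by rewrite /proj; ring.
have [nz1|z1] := pselect (nonzero (proj 1)).
  exists (proj 1); split=> // [|y]; last exact: proj_stab.
  by apply/stabP; left; rewrite proj_eig; [apply: funext=> j; rewrite mul1r | left].
exists (proj (-1)); split=> [|| y]; last exact: proj_stab.
- exists j0; apply: contra vj0 => /eqP zm1; apply/eqP.
  have z1j0 : proj 1 j0 = 0 by apply/eqP/negPn/negP=> h; apply: z1; exists j0.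
  have : v j0 *+ 2 = proj 1 j0 + proj (-1) j0 by rewrite /proj mulr2n; ring.
  by rewrite zm1 z1j0 addr0 => /eqP; rewrite mulrn_eq0 => /eqP.
- apply/stabP; right; rewrite proj_eig; last by right.
  by apply: funext=> j; rewrite mulN1r.
Qed.

Lemma exists_common_eigenvector (T : {set F2n n}) :
  {in T &, forall t t', symp_sign C t t' = 1} ->
  forall v, nonzero v -> exists w, nonzero w /\ T \subset stab w.
Proof.
move=> hT v; have [k] := ubnP #|T :\: stab v|; elim: k v => // k IH v hk hv.
have [Tv|] := boolP (T \subset stab v); first by exists v.
rewrite -finset.setD_eq0 => /set0Pn [t]; rewrite finset.in_setD => /andP [tv tT].
have [w [hw tw vw]] := stab_extend t hv; apply: (IH w _ hw).
suff /proper_card : T :\: stab w \proper T :\: stab v by move/leq_trans; apply.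
apply/properP; split; last by exists t; rewrite finset.in_setD ?tw ?tv.
apply/fintype.subsetP=> y; rewrite !finset.in_setD=> /andP [yw yT]; rewrite yT andbT.
by apply: contra yw=> yv; apply: vw; rewrite // hT.
Qed.

Lemma stab_maximal_extend v : nonzero v ->
  exists w, [/\ nonzero w, stab v \subset stab w & stab_maximal w].
Proof.
have [k] := ubnP #|~: stab v|; elim: k v => // k IH v hk hv.
have [hmax|nmax] := pselect (stab_maximal v); first by exists v.
have [x [xv xcomm]] : exists x, x \notin stab v /\
    forall y, y \in stab v -> symp_sign C x y = 1.
  apply: contra_notP nmax=> hn x.
  have [|xv] := boolP (x \in stab v); first by left.
  right; apply: contra_notP hn=> hn2; exists x; split=> // y hy.
  by case: (symp_sign_pm1 C x y)=> // e; exfalso; apply: hn2; exists y.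
have [w [hw xw vw]] := stab_extend x hv.
have sub_vw : stab v \subset stab w.
  by apply/fintype.subsetP=> y hy; apply: vw hy (xcomm y hy).
have [|w' [hw' ww' hmax']] := IH w _ hw.
  suff /proper_card : ~: stab w \proper ~: stab v by move/leq_trans; apply.
  apply/properP; split; first by rewrite finset.setCS.
  by exists x; rewrite !finset.in_setC ?xw.
by exists w'; split=> //; apply: fintype.subset_trans ww'.
Qed.

Lemma stab_normalize w : nonzero w ->
  exists phi, braket phi phi = 1 /\ stab w \subset stab phi.
Proof.
move=> [j0 wj0]; have ww_real : braket w w = (complex.Re (braket w w))%:C.
  by rewrite RRe_real // ger0_real // braket_ge0.
set r := complex.Re (braket w w) in ww_real.
have r_gt0 : 0 < r.
  rewrite lt_def -ler0c -ww_real braket_ge0 andbT; apply/eqP=> r0.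
  move: ww_real; rewrite r0 => /eqP; rewrite psumr_eq0; last first.
    by move=> k _; rewrite mulrC mul_conjC_ge0.
  move=> /allP /(_ j0 (mem_index_enum _)) /=.
  by rewrite mulf_eq0 conjC_eq0 orbb (negbTE wj0).
exists (fun j => ((Num.sqrt r)^-1)%:C * w j); split.
  rewrite braketZl braketZr ww_real conjC_real -!rmorphM.
  by rewrite mulrA -invfM -expr2 sqr_sqrtr ?ltW // mulVf ?gt_eqF.
apply/fintype.subsetP=> x /stabP hx; apply/stabP; rewrite weylZ.
by case: hx=> ->; [left | right]=> //; apply: funext=> j; rewrite mulrN.
Qed.

Lemma commuting_set_stabilizer_state (T : {set F2n n}) :
  {in T &, forall t t', symp_sign C t t' = 1} ->
  exists phi, [/\ braket phi phi = 1, stab_maximal phi & T \subset stab phi].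
Proof.
move=> hT; have e0 : nonzero (fun j => (j == bits0 n)%:R).
  by exists (bits0 n); rewrite eqxx oner_neq0.
have [v [hv Tv]] := exists_common_eigenvector hT e0.
have [w [hw vw hmax]] := stab_maximal_extend hv.
have [phi [h1 wphi]] := stab_normalize hw.
exists phi; split=> //; first exact: stab_maximalS hmax.
by apply: fintype.subset_trans wphi; apply: fintype.subset_trans vw.
Qed.

Lemma symp_sign_orth x x' : \sum_y symp_sign R x y * symp_sign R x' y =
  if x == x' then (2 ^ n)%:R ^+ 2 else 0.
Proof.
case: x x' => [a b] [a' b']; rewrite sum_F2n /symp_sign /=.
have split_sign (u v : bits n) : bsign R v a * bsign R b u * (bsign R v a' * bsign R b' u) =
    bsign R (bxor b b') u * bsign R v (bxor a a').
  by rewrite bsignDr bsignDl; ring.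
under eq_bigr do under eq_bigr do rewrite split_sign.
under eq_bigr do rewrite -mulr_sumr sum_bsign.
rewrite -mulr_suml (eq_bigr (fun u : bits n => bsign R u (bxor b b'))); last first.
  by move=> u _; rewrite bsignC.
rewrite sum_bsign !bxor_eq0 xpair_eqE.
by case: (a == a'); case: (b == b'); rewrite /= ?mulr0 ?mul0r // expr2.
Qed.

Lemma fidelity_weyl_transform phi psi y :
  (2 ^ n)%:R * complex.Re (`|braket (W y phi) psi| ^+ 2)
  = \sum_x symp_sign R x y * expectR phi x * expectR psi x.
Proof.
have ReM (a : R) (z : C) : complex.Re (a%:C * z) = a * complex.Re z.
  by case: z => ? ? /=; rewrite mul0r subr0.
rewrite -ReM normCK rmorph_nat -sum_expect_conj.
rewrite (eq_bigr (fun x => (symp_sign R x y * expectR phi x * expectR psi x)%:C)).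
  by rewrite -rmorph_sum.
move=> x _; rewrite expect_weyl expectJ.
by rewrite !expect_real symp_sign_real -!rmorphM.
Qed.

Lemma exists_weyl_fidelity_ge phi psi :
  braket phi phi = 1 -> braket psi psi = 1 -> exists y,
  \sum_x (expectR phi x * expectR psi x) ^+ 2
    <= (2 ^ n)%:R * complex.Re (`|braket (W y phi) psi| ^+ 2).
Proof.
move=> h1phi h1psi; set N : R := (2 ^ n)%:R.
pose F y := complex.Re (`|braket (W y phi) psi| ^+ 2).
have N_neq0 : N != 0 by rewrite pnatr_eq0 expn_eq0.
have F_transform y : N * F y = \sum_x symp_sign R x y * (expectR phi x * expectR psi x).
  by rewrite fidelity_weyl_transform; apply: eq_bigr=> x _; rewrite mulrA.
have F_ge0 y : 0 <= F y.
  by have /andP [_] : 0 <= `|braket (W y phi) psi| ^+ 2 by rewrite exprn_ge0.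
have [y hy] := exists_ge_sqr_mean (bits0 n, bits0 n) F_ge0.
exists y; rewrite -(sum_orth_transform_sqr N_neq0 symp_sign_orth F_transform).
rewrite (sum_orth_transform N_neq0 symp_sign_orth F_transform (symp_sign0 R)) in hy.
by rewrite /expectR !expect0 //= mulr1 mulrC mulr1 in hy.
Qed.

Lemma heavy_commute psi : braket psi psi = 1 ->
  {in [set x | 1/2 < expectR psi x ^+ 2] &, forall t t', symp_sign C t t' = 1}.
Proof.
move=> h1 t t'; rewrite !inE => ht ht'.
case: (symp_sign_pm1 C t t') => // /(expectR_anticomm h1) hb.
by exfalso; move: ht ht' hb; lra.
Qed.

Lemma sum_stab_expectR_le phi psi (T : {set F2n n}) :
  braket phi phi = 1 -> T \subset stab phi ->
  \sum_(x in T) expectR psi x ^+ 2 <= \sum_x (expectR phi x * expectR psi x) ^+ 2.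
Proof.
move=> h1 /fintype.subsetP Tphi; rewrite big_mkcond /=; apply: ler_sum=> x _.
by case: ifP=> [/Tphi xphi|_]; rewrite ?sqr_ge0 // exprMn (expectR_stab h1 xphi) mul1r.
Qed.

Lemma stab_fidelity_ge phi psi : is_stabilizer_state phi -> braket psi psi = 1 ->
  complex.Re (`|braket phi psi| ^+ 2) <= stab_fidelity psi.
Proof.
move=> hphi h1; apply: ub_le_sup; last by exists phi.
exists 1 => _ [phi' [[phi'1 _] ->]].
have := braket_CauchySchwarz phi' h1.
by rewrite phi'1 -normCK -braketJ norm_conjC lecE => /andP [_].
Qed.

Lemma magic_eta_expectR psi :
  magic_eta psi = (((2 ^ n)%:R : R)^-1 * \sum_x expectR psi x ^+ 6)%:C.
Proof.
rewrite /magic_eta /pdist -[4]/(2 ^ 2)%:R -[2]/(2%:R) -!natrX -expnM mulnC expnM.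
rewrite [in X in _ = X]rmorphM [in X in _ = X]fmorphV rmorph_nat rmorph_sum.
under eq_bigr do rewrite -/(expect _ _) expect_real exprMn -exprM.
under [in X in _ = X]eq_bigr do rewrite rmorphXn.
have N_neq0 : ((2 ^ n)%:R : C) != 0 by rewrite pnatr_eq0 expn_eq0.
by rewrite -mulr_sumr natrX; field.
Qed.

End Weyl.

Theorem proposition6p1 (R : realType) (n : nat) (psi : qstate R n) :
  is_pure_state psi ->
  (4 * magic_eta psi - 1) / 3 <= (stab_fidelity psi)%:C.
Proof.
move=> h1.
have [phi [phi1 phi_max heavy_phi]] :=
  commuting_set_stabilizer_state (heavy_commute h1).
have [y Fy] := exists_weyl_fidelity_ge phi1 h1.
have Wphi := stabilizer_state_weyl y (stabilizer_state_maximal phi1 phi_max).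
have affineC (r : R) : (4 * r%:C - 1) / 3 = ((4 * r - 1) / 3)%:C.
  by rewrite fmorph_div rmorphB rmorphM rmorph1 !rmorph_nat.
rewrite magic_eta_expectR affineC lecR; apply: le_trans (stab_fidelity_ge Wphi h1).
apply: heavy_sixth_moment.
- by rewrite ltr0n expn_gt0.
- by move=> x; apply: expectR_sqr_le1.
- exact: sum_expectR_sqr.
- exact: le_trans (sum_stab_expectR_le psi phi1 heavy_phi) Fy.
Qed.
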